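(* Up to isomorphism, there is exactly one tournament $T$ on the vertex set $\{0,1,2,3,4,5\}$ such that for every $i,j\in\{0,1,2,3,4,5\}$ and every $k\in\{3,4,5\}$ there are a directed walk of length $k$ from $i$ to $j$ and a directed walk of length $k$ from $j$ to $i$.
   Context: A tournament is a digraph in which every pair of distinct vertices is joined by exactly one arc. A directed walk of length $k$ from $i$ to $j$ is a sequence of vertices $(v_0=i,v_1,\ldots,v_k=j)$ (repetitions allowed) with $(v_{t},v_{t+1})$ an arc for each $t$. *)

From mathcomp Require Import all_boot.
Set Implicit Arguments. Unset Strict Implicit. Unset Printing Implicit Defensive.

Definition tournament (T : finType) (e : rel T) : Prop :=
  (forall x, ~~ e x x) /\ (forall x y, x != y -> e x y = ~~ e y x).

Definition walk_of_length (T : finType) (e : rel T) (k : nat) (i j : T) : Prop :=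
  exists s : seq T, [/\ size s = k, path e i s & last i s = j].

Definition digraph_iso (T : finType) (e1 e2 : rel T) : Prop :=
  exists f : T -> T, bijective f /\ forall x y, e1 x y = e2 (f x) (f y).

Definition good_tournament (e : rel 'I_6) : Prop :=
  tournament e /\
  forall (i j : 'I_6) (k : nat), 3 <= k <= 5 ->
    walk_of_length e k i j /\ walk_of_length e k j i.

From mathcomp Require Import all_boot.
Set Implicit Arguments. Unset Strict Implicit. Unset Printing Implicit Defensive.

(* Walks of length 3 between all ordered pairs force walks of every greater
   length: each vertex is then the end of an arc, so a 3-walk to one of its
   in-neighbours extends by one step.  It thus suffices to decide the
   property for k = 3.  A tournament on {0,...,5} is determined by the
   orientation of its 15 edges; among the 2^15 orientations exactly 240 have
   all 3-walks, and each of them is a relabeling of one tournament built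
   from two directed triangles. *)

Section Walks.

Variables (T : finType) (e : rel T).

Lemma walk_of_length0 x y : walk_of_length e 0 x y <-> x = y.
Proof.
split; first by case=> s [/size0nil -> _ /=].
by move=> ->; exists [::].
Qed.

Lemma walk_of_lengthS k x y :
  walk_of_length e k.+1 x y <-> exists2 v, walk_of_length e k x v & e v y.
Proof.
split=> [[s []]|[v [s [size_s path_s last_s]] evy]].
  case/lastP: s => [//|s v]; rewrite size_rcons rcons_path last_rcons.
  by move=> [size_s] /andP[path_s evy] <-; exists (last x s) => //; exists s.
exists (rcons s y).
by rewrite size_rcons size_s rcons_path path_s last_rcons last_s evy.
Qed.

Lemma walk_of_length_allS k :
  (forall x y, walk_of_length e k.+1 x y) -> forall x y, walk_of_length e k.+2 x y.
Proof.
move=> walks x y; have [v _ evy] := iffLR (walk_of_lengthS _ _ _) (walks y y).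
by apply/walk_of_lengthS; exists v; first exact: walks.
Qed.

End Walks.

Lemma tournament_relabel (T : finType) (e : rel T) (f : T -> T) :
  injective f -> tournament e -> tournament (fun x y => e (f x) (f y)).
Proof.
move=> f_inj [e_irr e_anti]; split=> [x | x y xy]; first exact: e_irr.
by apply: e_anti; rewrite (inj_eq f_inj).
Qed.

(* The search runs on vertices labelled by nat: enumerations of finTypes do
   not reduce under vm_compute. *)
Definition walk_step (T : eqType) (vs : seq T) (r : rel T) (A : seq T) :=
  [seq y <- vs | has (r^~ y) A].

Definition walk_ends (T : eqType) (vs : seq T) (r : rel T) k x :=
  iter k (walk_step vs r) [:: x].

Definition complete_walks n (r : rel nat) k :=
  all (fun x => all (mem (walk_ends (iota 0 n) r k x)) (iota 0 n)) (iota 0 n).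

Lemma mem_iota_ord n (x : 'I_n) : val x \in iota 0 n.
Proof. by rewrite mem_iota add0n ltn_ord. Qed.

Section OrdinalModel.

Variables (n : nat) (e : rel 'I_n) (r : rel nat).
Hypothesis e_r : forall x y : 'I_n, e x y = r x y.

Lemma walk_ends_lt k (x : 'I_n) v : v \in walk_ends (iota 0 n) r k x -> v < n.
Proof.
case: k => [|k] /=; first by rewrite inE => /eqP->.
by rewrite mem_filter mem_iota => /andP[_ /andP[]].
Qed.

Lemma walk_endsP k (x y : 'I_n) :
  reflect (walk_of_length e k x y) (val y \in walk_ends (iota 0 n) r k x).
Proof.
elim: k y => [|k IHk] y.
  apply: (iffP idP) => [|/walk_of_length0 ->]; last exact: mem_head.
  by rewrite inE => /eqP/val_inj ->; apply/walk_of_length0.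
apply: (iffP idP) => [|/walk_of_lengthS [v /IHk xv evy]] /=.
  rewrite mem_filter => /andP[/hasP[v xv rvy] _].
  have v_lt := walk_ends_lt xv.
  apply/walk_of_lengthS; exists (Ordinal v_lt); first exact/IHk.
  by rewrite e_r.
rewrite mem_filter mem_iota_ord andbT; apply/hasP.
by exists (val v) => //; rewrite -e_r.
Qed.

Lemma complete_walksP k :
  reflect (forall x y : 'I_n, walk_of_length e k x y) (complete_walks n r k).
Proof.
apply: (iffP allP) => [walks x y | walks a].
  by apply/walk_endsP; move/allP: (walks x (mem_iota_ord x)); apply; apply: mem_iota_ord.
rewrite mem_iota => /andP[_ a_lt]; apply/allP => b; rewrite mem_iota => /andP[_ b_lt].
exact/(walk_endsP _ (Ordinal a_lt) (Ordinal b_lt))/walks.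
Qed.

End OrdinalModel.

Definition choices (I T : Type) (s : seq I) (g : I -> seq T) : seq (seq T) :=
  foldr (fun a C => [seq x :: c | x <- g a, c <- C]) [:: [::]] s.

Lemma map_mem_choices (I T : eqType) (s : seq I) (g : I -> seq T) f :
  {in s, forall a, f a \in g a} -> map f s \in choices s g.
Proof.
elim: s => //= a s IHs fg; apply: allpairs_f; first exact/fg/mem_head.
by apply: IHs => b sb; apply/fg; rewrite inE sb orbT.
Qed.

Definition tournament_codes n : seq (seq (seq bool)) :=
  choices (iota 0 n) (fun a => choices (iota 0 a) (fun=> [:: true; false])).

Definition nat_code n (r : rel nat) : seq (seq bool) :=
  [seq [seq r a b | b <- iota 0 a] | a <- iota 0 n].

Lemma nat_code_mem n r : nat_code n r \in tournament_codes n.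
Proof.
apply: map_mem_choices => a _; apply: map_mem_choices => b _.
by case: (r a b).
Qed.

Definition code_rel (rows : seq (seq bool)) : rel nat := fun a b =>
  if b < a then nth false (nth [::] rows a) b
  else if a < b then ~~ nth false (nth [::] rows b) a else false.

Section Coding.

Variables (n : nat) (e : rel 'I_n.+1).

Definition code_of := nat_code n.+1 (fun a b => e (inord a) (inord b)).

Lemma code_of_nat (r : rel nat) :
  (forall x y : 'I_n.+1, e x y = r x y) -> code_of = nat_code n.+1 r.
Proof.
move=> e_r; apply/eq_in_map => a; rewrite mem_iota => /andP[_ a_lt].
apply/eq_in_map => b; rewrite mem_iota => /andP[_ b_lt].
by rewrite e_r !inordK // (ltn_trans b_lt).
Qed.

Lemma nth_code_of (x y : 'I_n.+1) : y < x -> nth false (nth [::] code_of x) y = e x y.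
Proof.
move=> yx; rewrite (nth_map 0) ?size_iota // nth_iota // (nth_map 0) ?size_iota //.
by rewrite nth_iota // !add0n !inord_val.
Qed.

Lemma code_ofK : tournament e -> forall x y : 'I_n.+1, e x y = code_rel code_of x y.
Proof.
move=> [e_irr e_anti] x y; rewrite /code_rel; case: ltngtP => [yx | xy | /val_inj->].
- by rewrite nth_code_of.
- by rewrite nth_code_of // e_anti // -val_eqE neq_ltn xy.
- exact/negbTE.
Qed.

End Coding.

Lemma ord_nth_permutations n p : p \in permutations (iota 0 n) ->
  exists2 f : 'I_n -> 'I_n, injective f & forall x, f x = nth 0 p x :> nat.
Proof.
rewrite mem_permutations => p_perm.
have p_size : size p = n by rewrite (perm_size p_perm) size_iota.
have p_lt (x : 'I_n) : nth 0 p x < n.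
  have: nth 0 p x \in p by rewrite mem_nth // p_size.
  by rewrite (perm_mem p_perm) mem_iota.
exists (fun x => Ordinal (p_lt x)) => // x y /(congr1 val) /= /eqP.
rewrite nth_uniq ?p_size // => [/eqP/val_inj // |].
by rewrite (perm_uniq p_perm) iota_uniq.
Qed.

Lemma good_tournamentP (e : rel 'I_6) (r : rel nat) :
  (forall x y : 'I_6, e x y = r x y) -> tournament e ->
  reflect (good_tournament e) (complete_walks 6 r 3).
Proof.
move=> e_r e_tour; apply: (iffP (complete_walksP e_r 3)) => [walks3 | [_ walks]].
  have walks4 := walk_of_length_allS walks3.
  have walks5 := walk_of_length_allS walks4.
  by split=> // x y [|[|[|[|[|[|k]]]]]] //= _; split; auto.
by move=> x y; apply: (walks x y 3 isT).1.
Qed.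

(* u_i = i and v_i = i + 3 for i in Z/3: u_i -> u_(i+1), v_(i+1) -> v_i,
   v_i -> u_i, and u_i -> v_j for j != i. *)
Definition two_triangles : rel nat := fun a b =>
  let i := a %% 3 in let j := b %% 3 in
  if a < 3 then (if b < 3 then j == i.+1 %% 3 else i != j)
  else if b < 3 then i == j else i == j.+1 %% 3.

Lemma tournament_two_triangles : tournament (fun x y : 'I_6 => two_triangles x y).
Proof.
split=> [[[|[|[|[|[|[|//]]]]]] ?]|[[|[|[|[|[|[|//]]]]]] ?] [[|[|[|[|[|[|//]]]]]] ?]] //.
Qed.

Lemma good_two_triangles : good_tournament (fun x y : 'I_6 => two_triangles x y).
Proof.
apply/(good_tournamentP (r := two_triangles) (fun _ _ => erefl) tournament_two_triangles).
by vm_compute.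
Qed.

Definition relabelings n (r : rel nat) :=
  [seq nat_code n (fun a b => r (nth 0 p a) (nth 0 p b)) | p <- permutations (iota 0 n)].

Lemma good_code_relabeling rows :
  rows \in tournament_codes 6 -> complete_walks 6 (code_rel rows) 3 ->
  rows \in relabelings 6 two_triangles.
Proof.
have search : all (mem (relabelings 6 two_triangles))
  [seq rows <- tournament_codes 6 | complete_walks 6 (code_rel rows) 3].
  by vm_compute.
move=> rows_code walks; apply: (allP search).
by rewrite mem_filter walks.
Qed.

Theorem mainTheorem16 :
  exists e : rel 'I_6, good_tournament e /\
    forall e' : rel 'I_6, good_tournament e' -> digraph_iso e' e.
Proof.
exists (fun x y : 'I_6 => two_triangles x y); split; first exact: good_two_triangles.
move=> e e_good; have e_tour := e_good.1; have e_code := code_ofK e_tour.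
have walks := introT (good_tournamentP e_code e_tour) e_good.
have /mapP[p /ord_nth_permutations [f f_inj fE] code_p] :=
  good_code_relabeling (nat_code_mem _ _) walks.
have ef_tour := tournament_relabel f_inj tournament_two_triangles.
have ef_code : code_of (fun x y => two_triangles (f x) (f y)) = code_of e.
  by rewrite (code_p : code_of e = _); apply: code_of_nat => x y; rewrite !fE.
exists f; split; first exact: injF_bij.
by move=> x y; rewrite e_code -ef_code -(code_ofK ef_tour).
Qed.
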